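(* Let $\mathcal{K}$ be a 2-category and $\mathcal{H}$ a class of 1-cells of $\mathcal{K}$ each of which is a corepresentable surjection. If $X,Y$ are right Kan injective with respect to all maps in $\mathcal{H}$, then every 1-cell $g:X\to Y$ preserves right Kan extensions along all maps in $\mathcal{H}$; and similarly, if $X,Y$ are left Kan injective with respect to all maps in $\mathcal{H}$, every 1-cell $X\to Y$ preserves left Kan extensions along maps in $\mathcal{H}$. Hence $\mathsf{LInj}(\mathcal{H})$ and $\mathsf{RInj}(\mathcal{H})$ are full sub-2-categories of $\mathcal{K}$.
   Context: A 1-cell $f:A\to B$ is a corepresentable surjection if for every object $X$ the functor $-\circ f:\mathcal{K}(B,X)\to\mathcal{K}(A,X)$ is conservative. $X$ is right Kan injective w.r.t. $f:A\to B$ if for every $x:A\to X$ a right Kan extension $\mathsf{ran}_fx$ exists (a 1-cell $B\to X$ with universal 2-cell $\epsilon:\mathsf{ran}_fx\circ f\Rightarrow x$) and $\epsilon$ is invertible; left Kan injectivity is the dual notion (with left Kan extensions and invertible units). A 1-cell $h$ preserves $\mathsf{ran}_fx$ if $(h\circ\mathsf{ran}_fx,h\epsilon)$ is a right Kan extension of $hx$ along $f$. $\mathsf{RInj}(\mathcal{H})$ (resp. $\mathsf{LInj}(\mathcal{H})$) is the locally full sub-2-category of objects right (resp. left) Kan injective w.r.t. all maps in $\mathcal{H}$ and 1-cells preserving these right (resp. left) Kan extensions. *)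

Definition castc {X : Type} (C : X -> X -> Type) {f f' g g' : X}
  (e1 : f = f') (e2 : g = g') (a : C f g) : C f' g' :=
  match e1 in _ = f0 return C f0 g' with
  | eq_refl => match e2 in _ = g0 return C f g0 with eq_refl => a end
  end.

(* A (strict) 2-category. comp1 g f is "g o f"; cell f g is the type of
   2-cells f => g; vcomp b a is vertical composite "b . a" (first a);
   hcomp b a : g o f => g' o f' for b : g => g', a : f => f'. *)
Record TwoCat := {
  ob : Type;
  hom : ob -> ob -> Type;
  cell : forall {A B : ob}, hom A B -> hom A B -> Type;
  id1 : forall A : ob, hom A A;
  comp1 : forall {A B C : ob}, hom B C -> hom A B -> hom A C;
  id2 : forall {A B : ob} (f : hom A B), cell f f;
  vcomp : forall {A B : ob} {f g h : hom A B}, cell g h -> cell f g -> cell f h;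
  hcomp : forall {A B C : ob} {f f' : hom A B} {g g' : hom B C},
      cell g g' -> cell f f' -> cell (comp1 g f) (comp1 g' f');
  vcompA : forall {A B : ob} {f g h k : hom A B} (c : cell h k) (b : cell g h) (a : cell f g),
      vcomp c (vcomp b a) = vcomp (vcomp c b) a;
  vcomp_id_l : forall {A B : ob} {f g : hom A B} (a : cell f g), vcomp (id2 g) a = a;
  vcomp_id_r : forall {A B : ob} {f g : hom A B} (a : cell f g), vcomp a (id2 f) = a;
  comp1A : forall {A B C D : ob} (h : hom C D) (g : hom B C) (f : hom A B),
      comp1 h (comp1 g f) = comp1 (comp1 h g) f;
  comp1_id_l : forall {A B : ob} (f : hom A B), comp1 (id1 B) f = f;
  comp1_id_r : forall {A B : ob} (f : hom A B), comp1 f (id1 A) = f;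
  hcomp_id : forall {A B C : ob} (f : hom A B) (g : hom B C),
      hcomp (id2 g) (id2 f) = id2 (comp1 g f);
  interchange : forall {A B C : ob} {f f' f'' : hom A B} {g g' g'' : hom B C}
      (b' : cell g' g'') (b : cell g g') (a' : cell f' f'') (a : cell f f'),
      hcomp (vcomp b' b) (vcomp a' a) = vcomp (hcomp b' a') (hcomp b a);
  hcompA : forall {A B C D : ob} {f f' : hom A B} {g g' : hom B C} {h h' : hom C D}
      (c : cell h h') (b : cell g g') (a : cell f f'),
      castc (@cell A D) (comp1A h g f) (comp1A h' g' f') (hcomp c (hcomp b a))
      = hcomp (hcomp c b) a;
  hcomp_id1_l : forall {A B : ob} {f f' : hom A B} (a : cell f f'),
      castc (@cell A B) (comp1_id_l f) (comp1_id_l f') (hcomp (id2 (id1 B)) a) = a;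
  hcomp_id1_r : forall {A B : ob} {f f' : hom A B} (a : cell f f'),
      castc (@cell A B) (comp1_id_r f) (comp1_id_r f') (hcomp a (id2 (id1 A))) = a
}.

Arguments ob : clear implicits.
Arguments hom {_}.
Arguments cell {_ _ _}.
Arguments id1 {_}.
Arguments comp1 {_ _ _ _}.
Arguments id2 {_ _ _}.
Arguments vcomp {_ _ _ _ _ _}.
Arguments hcomp {_ _ _ _ _ _ _ _}.
Arguments comp1A {_ _ _ _ _}.

Section Defs.
Variable K : TwoCat.

Definition whiskerL {A B C : ob K} (h : hom B C) {f f' : hom A B} (a : cell f f')
  : cell (comp1 h f) (comp1 h f') := hcomp (id2 h) a.
Definition whiskerR {A B C : ob K} {g g' : hom B C} (b : cell g g') (f : hom A B)
  : cell (comp1 g f) (comp1 g' f) := hcomp b (id2 f).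

Definition invertible {A B : ob K} {f g : hom A B} (a : cell f g) : Prop :=
  exists b : cell g f, vcomp b a = id2 f /\ vcomp a b = id2 g.

(* f : A -> B is a corepresentable surjection: each - o f : K(B,X) -> K(A,X)
   is conservative (reflects invertibility of 2-cells) *)
Definition corep_surj {A B : ob K} (f : hom A B) : Prop :=
  forall (X : ob K) (g g' : hom B X) (a : cell g g'),
    invertible (whiskerR a f) -> invertible a.

Definition is_ran {A B X : ob K} (f : hom A B) (x : hom A X)
  (r : hom B X) (eps : cell (comp1 r f) x) : Prop :=
  forall (s : hom B X) (b : cell (comp1 s f) x),
    exists! sg : cell s r, vcomp eps (whiskerR sg f) = b.

Definition is_lan {A B X : ob K} (f : hom A B) (x : hom A X)
  (l : hom B X) (eta : cell x (comp1 l f)) : Prop :=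
  forall (s : hom B X) (b : cell x (comp1 s f)),
    exists! sg : cell l s, vcomp (whiskerR sg f) eta = b.

Definition rkan_inj {A B : ob K} (f : hom A B) (X : ob K) : Prop :=
  forall x : hom A X, exists (r : hom B X) (eps : cell (comp1 r f) x),
    is_ran f x r eps /\ invertible eps.

Definition lkan_inj {A B : ob K} (f : hom A B) (X : ob K) : Prop :=
  forall x : hom A X, exists (l : hom B X) (eta : cell x (comp1 l f)),
    is_lan f x l eta /\ invertible eta.

Definition preserves_ran {A B X Y : ob K} (h : hom X Y) (f : hom A B) (x : hom A X)
  : Prop :=
  forall (r : hom B X) (eps : cell (comp1 r f) x),
    is_ran f x r eps ->
    is_ran f (comp1 h x) (comp1 h r)
      (castc (@cell K A Y) (comp1A h r f) eq_refl (whiskerL h eps)).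

Definition preserves_lan {A B X Y : ob K} (h : hom X Y) (f : hom A B) (x : hom A X)
  : Prop :=
  forall (l : hom B X) (eta : cell x (comp1 l f)),
    is_lan f x l eta ->
    is_lan f (comp1 h x) (comp1 h l)
      (castc (@cell K A Y) eq_refl (comp1A h l f) (whiskerL h eta)).

Definition hclass := forall A B : ob K, hom A B -> Prop.

Definition RKInj (H : hclass) (X : ob K) : Prop :=
  forall (A B : ob K) (f : hom A B), H A B f -> rkan_inj f X.
Definition LKInj (H : hclass) (X : ob K) : Prop :=
  forall (A B : ob K) (f : hom A B), H A B f -> lkan_inj f X.

End Defs.

Arguments invertible {K A B f g}.
Arguments corep_surj {K A B}.
Arguments preserves_ran {K A B X Y}.
Arguments preserves_lan {K A B X Y}.
Arguments RKInj {K}.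
Arguments LKInj {K}.

(* If X is right Kan injective w.r.t. f, every right Kan extension (r, eps) of x along f has
   invertible counit, being isomorphic to one that does; hence so does g eps.  Y has a right Kan
   extension of g x with invertible counit, and the comparison 2-cell from g r to it becomes
   invertible after whiskering by f, so it is invertible because f is a corepresentable surjection.
   Therefore (g r, g eps) is a right Kan extension.  Left Kan extensions are right Kan extensions in
   the 2-category with reversed 2-cells. *)


Lemma castc_flip {X : Type} (C : X -> X -> Type) {f f' g g' : X}
  (e1 : f = f') (e2 : g = g') (a : C g f) :
  castc (fun u v => C v u) e1 e2 a = castc C e2 e1 a.
Proof. destruct e1, e2; reflexivity. Qed.

Section Right.
Variable K : TwoCat.

Lemma whiskerR_vcomp {A B C : ob K} {g g' g'' : hom B C} (b' : cell g' g'') (b : cell g g')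
  (f : hom A B) :
  whiskerR K (vcomp b' b) f = vcomp (whiskerR K b' f) (whiskerR K b f).
Proof. unfold whiskerR. rewrite <- interchange, vcomp_id_l. reflexivity. Qed.

Lemma whiskerR_id2 {A B C : ob K} (g : hom B C) (f : hom A B) :
  whiskerR K (id2 g) f = id2 (comp1 g f).
Proof. apply hcomp_id. Qed.

Lemma whiskerL_vcomp {A B C : ob K} (h : hom B C) {f f' f'' : hom A B}
  (a' : cell f' f'') (a : cell f f') :
  whiskerL K h (vcomp a' a) = vcomp (whiskerL K h a') (whiskerL K h a).
Proof. unfold whiskerL. rewrite <- interchange, vcomp_id_l. reflexivity. Qed.

Lemma whiskerL_id2 {A B C : ob K} (h : hom B C) (f : hom A B) :
  whiskerL K h (id2 f) = id2 (comp1 h f).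
Proof. apply hcomp_id. Qed.

Lemma invertible_whiskerR {A B C : ob K} {g g' : hom B C} (b : cell g g') (f : hom A B) :
  invertible b -> invertible (whiskerR K b f).
Proof.
  intros [b' [Hb'b Hbb']]. exists (whiskerR K b' f).
  rewrite <- !whiskerR_vcomp, Hb'b, Hbb', !whiskerR_id2. auto.
Qed.

Lemma invertible_whiskerL {A B C : ob K} (h : hom B C) {f f' : hom A B} (a : cell f f') :
  invertible a -> invertible (whiskerL K h a).
Proof.
  intros [a' [Ha'a Haa']]. exists (whiskerL K h a').
  rewrite <- !whiskerL_vcomp, Ha'a, Haa', !whiskerL_id2. auto.
Qed.

Lemma invertible_castc {A B : ob K} {f f' g g' : hom A B} (e1 : f = f') (e2 : g = g')
  (a : cell f g) :
  invertible a -> invertible (castc (@cell K A B) e1 e2 a).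
Proof. destruct e1, e2. auto. Qed.

Lemma invertible_vcomp {A B : ob K} {f g h : hom A B} (b : cell g h) (a : cell f g) :
  invertible b -> invertible a -> invertible (vcomp b a).
Proof.
  intros [b' [Hb'b Hbb']] [a' [Ha'a Haa']]. exists (vcomp a' b'). split.
  - rewrite <- vcompA, (vcompA _ b' b a), Hb'b, vcomp_id_l. auto.
  - rewrite <- vcompA, (vcompA _ a a' b'), Haa', vcomp_id_l. auto.
Qed.

Lemma invertible_vcomp_cancel {A B : ob K} {f g h : hom A B} (b : cell g h) (a : cell f g) :
  invertible b -> invertible (vcomp b a) -> invertible a.
Proof.
  intros [b' [Hb'b Hbb']] Hba.
  replace a with (vcomp b' (vcomp b a)) by (rewrite vcompA, Hb'b, vcomp_id_l; auto).
  apply invertible_vcomp; auto. exists b. auto.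
Qed.

Lemma is_ran_cell_inj {A B X : ob K} {f : hom A B} {x : hom A X} {r : hom B X}
  {eps : cell (comp1 r f) x} {s : hom B X} (u v : cell s r) :
  is_ran K f x r eps ->
  vcomp eps (whiskerR K u f) = vcomp eps (whiskerR K v f) -> u = v.
Proof.
  intros Hr Huv. destruct (Hr s (vcomp eps (whiskerR K v f))) as [w [_ Hw]].
  rewrite <- (Hw u), (Hw v); auto.
Qed.

Lemma ran_comparison_invertible {A B X : ob K} {f : hom A B} {x : hom A X}
  {r r' : hom B X} {eps : cell (comp1 r f) x} {eps' : cell (comp1 r' f) x} (s : cell r' r) :
  is_ran K f x r eps -> is_ran K f x r' eps' ->
  vcomp eps (whiskerR K s f) = eps' -> invertible s.
Proof.
  intros Hr Hr' Hs. destruct (Hr' r eps) as [t [Ht _]]. exists t. split.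
  - apply (is_ran_cell_inj _ _ Hr').
    rewrite whiskerR_vcomp, whiskerR_id2, vcompA, Ht, Hs, vcomp_id_r. auto.
  - apply (is_ran_cell_inj _ _ Hr).
    rewrite whiskerR_vcomp, whiskerR_id2, vcompA, Hs, Ht, vcomp_id_r. auto.
Qed.

Lemma ran_counit_invertible {A B X : ob K} (f : hom A B) (x : hom A X) (r : hom B X)
  (eps : cell (comp1 r f) x) :
  rkan_inj K f X -> is_ran K f x r eps -> invertible eps.
Proof.
  intros Hinj Hr. destruct (Hinj x) as [r' [eps' [Hr' Heps']]].
  destruct (Hr' r eps) as [s [Hs _]].
  rewrite <- Hs. apply invertible_vcomp, invertible_whiskerR; auto.
  apply (ran_comparison_invertible s Hr' Hr Hs).
Qed.

Lemma is_ran_iso {A B X : ob K} {f : hom A B} {x : hom A X} {r r' : hom B X}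
  {eps : cell (comp1 r f) x} (s : cell r' r) :
  is_ran K f x r eps -> invertible s -> is_ran K f x r' (vcomp eps (whiskerR K s f)).
Proof.
  intros Hr [s' [Hs's Hss']] t b. destruct (Hr t b) as [rho [Hrho Hunique]].
  exists (vcomp s' rho). split.
  - rewrite <- vcompA, <- whiskerR_vcomp, vcompA, Hss', vcomp_id_l. auto.
  - intros sg Hsg.
    assert (Hrho_sg : rho = vcomp s sg)
      by (apply Hunique; rewrite whiskerR_vcomp, vcompA; auto).
    rewrite Hrho_sg, vcompA, Hs's, vcomp_id_l. auto.
Qed.

Lemma is_ran_of_invertible {A B X : ob K} (f : hom A B) (x : hom A X)
  (r r' : hom B X) (eps : cell (comp1 r f) x) (eps' : cell (comp1 r' f) x) :
  corep_surj f -> is_ran K f x r eps -> invertible eps -> invertible eps' ->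
  is_ran K f x r' eps'.
Proof.
  intros Hf Hr Heps Heps'. destruct (Hr r' eps') as [s [Hs _]].
  rewrite <- Hs. apply is_ran_iso; auto.
  apply (Hf X), (invertible_vcomp_cancel eps); auto. rewrite Hs. auto.
Qed.

Lemma preserves_ran_of_rkan_inj {A B X Y : ob K} (g : hom X Y) (f : hom A B) (x : hom A X) :
  corep_surj f -> rkan_inj K f X -> rkan_inj K f Y -> preserves_ran g f x.
Proof.
  intros Hf HX HY r eps Hr.
  destruct (HY (comp1 g x)) as [R [E [HR HE]]].
  apply (is_ran_of_invertible f _ R _ E); auto.
  apply invertible_castc, invertible_whiskerL, (ran_counit_invertible f x r); auto.
Qed.

End Right.

(* [is_lan K] is convertible to [is_ran (co K)]; under [co], [invertible] swaps its two equations
   and [preserves_lan] its two casts. *)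
Definition co (K : TwoCat) : TwoCat.
Proof.
  refine {| ob := ob K; hom := @hom K; cell := fun A B f g => @cell K A B g f;
            id1 := @id1 K; comp1 := @comp1 K; id2 := @id2 K;
            vcomp := fun A B f g h b a => vcomp a b;
            hcomp := fun A B C f f' g g' b a => hcomp b a;
            comp1A := @comp1A K; comp1_id_l := @comp1_id_l K; comp1_id_r := @comp1_id_r K |}.
  - intros. symmetry. apply vcompA.
  - intros. apply vcomp_id_r.
  - intros. apply vcomp_id_l.
  - intros. apply hcomp_id.
  - intros. apply interchange.
  - intros. rewrite castc_flip. apply hcompA.
  - intros. rewrite castc_flip. apply hcomp_id1_l.
  - intros. rewrite castc_flip. apply hcomp_id1_r.
Defined.

Section Left.
Variable K : TwoCat.

Lemma invertible_co {A B : ob K} {f g : hom A B} (a : cell f g) :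
  @invertible (co K) A B g f a <-> invertible a.
Proof. split; intros [b [Hba Hab]]; exists b; auto. Qed.

Lemma corep_surj_co {A B : ob K} (f : hom A B) : corep_surj f -> @corep_surj (co K) A B f.
Proof. intros Hf X g g' a Ha. apply invertible_co, Hf, invertible_co, Ha. Qed.

Lemma lkan_inj_co {A B : ob K} (f : hom A B) (X : ob K) :
  lkan_inj K f X -> rkan_inj (co K) f X.
Proof.
  intros Hinj x. destruct (Hinj x) as [l [eta [Hl Heta]]].
  exists l, eta. split; [exact Hl | apply invertible_co, Heta].
Qed.

Lemma preserves_lan_of_lkan_inj {A B X Y : ob K} (g : hom X Y) (f : hom A B) (x : hom A X) :
  corep_surj f -> lkan_inj K f X -> lkan_inj K f Y -> preserves_lan g f x.
Proof.
  intros Hf HX HY l eta Hl.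
  pose proof (@preserves_ran_of_rkan_inj (co K) A B X Y g f x (corep_surj_co f Hf)
                (lkan_inj_co f X HX) (lkan_inj_co f Y HY) l eta Hl) as Hpres.
  rewrite castc_flip in Hpres. exact Hpres.
Qed.

End Left.

Theorem proposition2p3p3 (K : TwoCat) (H : hclass K)
  (Hcs : forall (A B : ob K) (f : hom A B), H A B f -> corep_surj f) :
  (forall (X Y : ob K), RKInj H X -> RKInj H Y ->
     forall (g : hom X Y) (A B : ob K) (f : hom A B), H A B f ->
       forall x : hom A X, preserves_ran g f x)
  /\
  (forall (X Y : ob K), LKInj H X -> LKInj H Y ->
     forall (g : hom X Y) (A B : ob K) (f : hom A B), H A B f ->
       forall x : hom A X, preserves_lan g f x).
Proof.
  split.
  - intros X Y HX HY g A B f Hf x.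
    apply preserves_ran_of_rkan_inj; auto.
  - intros X Y HX HY g A B f Hf x.
    apply preserves_lan_of_lkan_inj; auto.
Qed.
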